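(* Let $\mathbb{F}_q$ have characteristic $p\ne2$, $f(X)=aX^2+c\in\mathbb{F}_q[X]$ with $a\neq0$, $r\ge 1$, $k\ge 2$. For every $(x_1,\dots,x_k)\in\overline{\mathbb{F}_q}^{\,k}$ with $f^r(x_1)=\dots=f^r(x_k)$ there exist a permutation $\sigma\in S_k$ and integers $d_1,\dots,d_{k-1}\in\{-1,0,\dots,r-1\}$ such that $\phi(x_{\sigma(i)},x_{\sigma(i+1)};d_i)=0$ for $1\le i\le k-1$, and such that for every $1\le s<t\le k-1$ the maximum of $d_s,\dots,d_t$ is either $-1$ or is attained at exactly one index.
   Context: Iterates: $f^0(X)=X$, $f^{j+1}(X)=f(f^j(X))$. Define $\phi(X,Y;-1)=X-Y$ and $\phi(X,Y;d)=f^d(X)+f^d(Y)$ for $d\ge0$. *)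

From HB Require Import structures.
From mathcomp Require Import all_boot all_order all_algebra all_fingroup all_field.
Set Implicit Arguments. Unset Strict Implicit. Unset Printing Implicit Defensive.
Import Order.TTheory GRing.Theory Num.Theory.
Local Open Scope ring_scope.

Definition quadf (L : fieldType) (a c : L) (x : L) : L := a * x ^+ 2 + c.

Definition fiter (L : fieldType) (a c : L) (d : nat) (x : L) : L :=
  iter d (quadf a c) x.

(* phi(X,Y;-1) = X - Y ; phi(X,Y;d) = f^d(X) + f^d(Y) for d >= 0.
   (Only d >= -1 is ever used; negative d other than -1 are excluded
   by the hypotheses of the theorem.) *)
Definition phi (L : fieldType) (a c : L) (x y : L) (d : int) : L :=
  match d with
  | Posz n => fiter a c n x + fiter a c n y
  | Negz _ => x - y
  end.

Definition max_neg1_or_unique (d : nat -> int) (s t : nat) : Prop :=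
  (forall i : nat, (s <= i <= t)%N -> d i = -1)
  \/ (exists j : nat, (s <= j <= t)%N /\
        forall i : nat, (s <= i <= t)%N -> i <> j -> d i < d j).

From HB Require Import structures.
From mathcomp Require Import all_boot all_order all_algebra all_fingroup all_field.
From mathcomp Require Import zify.
Import Order.TTheory GRing.Theory Num.Theory.
Local Open Scope ring_scope.

(* Since f(u) = f(w) forces u = w or u = -w, the points
   x_i with f^r(x_i) all equal split into two classes according to the value
   ±v of f^(r-1)(x_i).  Order each class recursively, with all labels at most
   r-2, and concatenate the two chains: the junction gets the label d = r-1,
   because there f^(r-1)(x) + f^(r-1)(y) = v + (-v) = 0.  Every window that
   contains the junction then has its maximum r-1 attained exactly once, and
   every other window lies inside one of the two halves. *)

Definition join_seq (dP : nat -> int) (n : nat) (m : int) (dQ : nat -> int)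
    : nat -> int :=
  fun i => if (i < n)%N then dP i else if i == n then m else dQ (i - n.+1)%N.

Lemma eq_max_neg1_or_unique (d d' : nat -> int) s t :
  (forall i, (s <= i <= t)%N -> d i = d' i) ->
  max_neg1_or_unique d s t -> max_neg1_or_unique d' s t.
Proof.
move=> dd' [d_neg1 | [j [jst d_lt]]].
  by left=> i ist; rewrite -dd' // d_neg1.
right; exists j; split=> // i ist ij; rewrite -!dd' //; exact: d_lt.
Qed.

Lemma max_neg1_or_unique_shift (d : nat -> int) n s t :
  max_neg1_or_unique d s t ->
  max_neg1_or_unique (fun i => d (i - n)%N) (s + n) (t + n).
Proof.
move=> [d_neg1 | [j [jst d_lt]]].
  by left=> i ist; apply: d_neg1; lia.
right; exists (j + n)%N; split; first lia.
by move=> i ist ij; rewrite addnK; apply: d_lt; lia.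
Qed.

Lemma max_neg1_or_unique_join (dP dQ : nat -> int) (n nQ : nat) (m : int) :
  (forall i, (i < n)%N -> dP i < m) -> (forall i, (i < nQ)%N -> dQ i < m) ->
  (forall s t, (s < t)%N -> (t < n)%N -> max_neg1_or_unique dP s t) ->
  (forall s t, (s < t)%N -> (t < nQ)%N -> max_neg1_or_unique dQ s t) ->
  forall s t, (s < t)%N -> (t < n + nQ.+1)%N ->
    max_neg1_or_unique (join_seq dP n m dQ) s t.
Proof.
move=> dP_lt dQ_lt dP_max dQ_max s t st tn.
case: (ltnP t n) => [tP | nt].
  apply: (@eq_max_neg1_or_unique dP); last exact: dP_max.
  by move=> i ist; rewrite /join_seq ifT //; lia.
case: (ltnP n s) => [ns | sn].
  have := @max_neg1_or_unique_shift _ n.+1 _ _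
            (dQ_max (s - n.+1)%N (t - n.+1)%N ltac:(lia) ltac:(lia)).
  rewrite !subnK; try lia; move/eq_max_neg1_or_unique; apply=> i ist.
  by rewrite /join_seq ifF ?ifF //; lia.
right; exists n; split; first lia.
move=> i ist ni; rewrite /join_seq ltnn eqxx.
case: ltnP => [iP | ?]; first exact: dP_lt.
by rewrite ifF; [apply: dQ_lt | ]; lia.
Qed.

Section QuadraticChains.
Variables (L : fieldType) (a c : L).
Hypothesis a_neq0 : a != 0.

Lemma fiterS n u : fiter a c n.+1 u = quadf a c (fiter a c n u).
Proof. by []. Qed.

Lemma quadf_eq (u w : L) : quadf a c u = quadf a c w -> u = w \/ u = - w.
Proof.
rewrite /quadf => /addIr/eqP; rewrite -subr_eq0 -mulrBr mulf_eq0 (negbTE a_neq0) /=.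
rewrite subr_sqr mulf_eq0 subr_eq0 addr_eq0 => /orP[]/eqP; by [left | right].
Qed.

Lemma phi_chain (I : eqType) (i0 : I) (x : I -> L) (r : nat) (s : seq I) :
  (forall i j, i \in s -> j \in s -> fiter a c r (x i) = fiter a c r (x j)) ->
  exists t (d : nat -> int), [/\ perm_eq s t,
    forall i, (i.+1 < size t)%N -> -1 <= d i < r%:Z,
    forall i, (i.+1 < size t)%N ->
      phi a c (x (nth i0 t i)) (x (nth i0 t i.+1)) (d i) = 0 &
    forall s' t', (s' < t')%N -> (t'.+1 < size t)%N -> max_neg1_or_unique d s' t'].
Proof.
elim: r s => [|r IH] s fs_eq.
  exists s, (fun _ => -1); split=> // [i is_lt | *]; last by left.
  have := fs_eq _ _ (mem_nth i0 (ltnW is_lt)) (mem_nth i0 is_lt).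
  by rewrite /phi /fiter /= => ->; rewrite subrr.
case: s fs_eq => [|x0 s0] fs_eq; first by exists [::], (fun _ => 0).
set s := x0 :: s0 in fs_eq *.
pose v := fiter a c r (x x0).
pose onv i := fiter a c r (x i) == v.
have fP i : i \in filter onv s -> fiter a c r (x i) = v.
  by rewrite mem_filter => /andP[/eqP].
have fQ i : i \in filter (predC onv) s -> fiter a c r (x i) = - v.
  rewrite mem_filter => /andP[/= not_onv is_i].
  have := fs_eq i x0 is_i (mem_head _ _); rewrite !fiterS => /quadf_eq[] // fi_v.
  by rewrite /onv fi_v eqxx in not_onv.
have [tP [dP [sP_tP dP_bd dP_phi dP_max]]] :=
  IH _ (fun i j iP jP => etrans (fP i iP) (esym (fP j jP))).
have [tQ [dQ [sQ_tQ dQ_bd dQ_phi dQ_max]]] :=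
  IH _ (fun i j iQ jQ => etrans (fQ i iQ) (esym (fQ j jQ))).
have [n size_tP] : exists n, size tP = n.+1.
  have : x0 \in tP by rewrite -(perm_mem sP_tP) mem_filter /onv eqxx mem_head.
  by case: (tP) => // ? l _; exists (size l).
exists (tP ++ tQ), (join_seq dP n r%:Z dQ).
rewrite size_cat size_tP addSn; split.
- by rewrite -(perm_filterC onv s) perm_cat.
- move=> i i_lt; rewrite /join_seq.
  case: ltnP => [iP | ?]; first by have := dP_bd i; lia.
  case: eqP => [// | ?]; have := dQ_bd (i - n.+1)%N; lia.
- move=> i i_lt; rewrite /join_seq !nth_cat size_tP.
  case: (ltnP i n) => [iP | ni].
    by rewrite !ifT //; [apply: dP_phi; rewrite size_tP | lia].
  case: eqP => [-> | ?].
    have lastP : nth i0 tP n \in filter onv s.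
      by rewrite (perm_mem sP_tP) mem_nth // size_tP.
    have headQ : nth i0 tQ 0 \in filter (predC onv) s.
      by rewrite (perm_mem sQ_tQ) mem_nth //; lia.
    by rewrite ltnSn ltnn subnn /phi fP // fQ // addrN.
  rewrite !ifF; try lia; have -> : (i.+1 - n.+1 = (i - n.+1).+1)%N by lia.
  by apply: dQ_phi; lia.
- move=> s' t' st tn.
  apply: (@max_neg1_or_unique_join _ _ n (size tQ).-1) => //; last lia.
  + by move=> i iP; have := dP_bd i; rewrite size_tP; lia.
  + by move=> i iQ; have := dQ_bd i; lia.
  + by move=> s1 t1 ? ?; apply: dP_max; lia.
  + by move=> s1 t1 ? ?; apply: dQ_max; lia.
Qed.

End QuadraticChains.

Lemma perm_of_enum_perm_eq {k : nat} (i0 : 'I_k) {t : seq 'I_k} :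
  perm_eq (enum 'I_k) t -> exists sigma : 'S_k, forall i, sigma i = nth i0 t i.
Proof.
move=> et; have size_t : size t = k by rewrite -(perm_size et) size_enum_ord.
have nth_inj : injective (fun i : 'I_k => nth i0 t i).
  have uniq_t : uniq t by rewrite -(perm_uniq et) enum_uniq.
  by move=> i j /eqP; rewrite nth_uniq ?size_t // => /eqP; apply: val_inj.
by exists (perm nth_inj) => i; rewrite permE.
Qed.

Theorem lemma5 (F : finFieldType) (L : closedFieldType)
    (iota : {rmorphism F -> L})
    (hchar : 2%N \notin [pchar F])
    (a c : F) (ha : a != 0) (r k : nat) (hr : (1 <= r)%N) (hk : (2 <= k)%N)
    (x : 'I_k -> L)
    (halg : forall i : 'I_k, exists2 p : {poly F}, p != 0 &
              root (map_poly iota p) (x i))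
    (heq : forall i j : 'I_k,
        fiter (iota a) (iota c) r (x i) = fiter (iota a) (iota c) r (x j)) :
  exists (sigma : 'S_k) (d : nat -> int),
    (forall i : nat, (i.+1 < k)%N -> -1 <= d i <= (r.-1)%:Z) /\
    (forall i j : 'I_k, nat_of_ord j = (nat_of_ord i).+1 ->
        phi (iota a) (iota c) (x (sigma i)) (x (sigma j)) (d i) = 0) /\
    (forall s t : nat, (s < t)%N -> (t.+1 < k)%N -> max_neg1_or_unique d s t).
Proof.
have i0 : 'I_k by apply: (@Ordinal k 0); lia.
have iota_a_neq0 : iota a != 0 by rewrite fmorph_eq0.
have [t [d [et d_bd d_phi d_max]]] :=
  @phi_chain _ _ _ iota_a_neq0 _ i0 x r (enum 'I_k) (fun i j _ _ => heq i j).
have size_t : size t = k by rewrite -(perm_size et) size_enum_ord.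
have [sigma sigmaE] := perm_of_enum_perm_eq i0 et.
exists sigma, d; split; [|split].
- by move=> i; rewrite -size_t => /d_bd; case: (r) hr => // r' _; lia.
- move=> i j ji; rewrite !sigmaE ji; apply: d_phi.
  by rewrite -ji size_t ltn_ord.
- by move=> s t1; rewrite -size_t; exact: d_max.
Qed.
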